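(* For every $\varepsilon \in (0,1)$, $\ell, z \in \mathbb{N}$ and every time series $x\in \mathbb{R}^z$ there exists a time series $x' \in \mathbb{R}^{z'}$ with $z' \in O\big(2^{O(\ell/\epsilon)^{(2\ell+2)}}\big)$ such that for every $y\in \mathbb{R}^\ell$, \[ (1-\varepsilon)\, \mathbf{d}_{dF}(x,y) \le \mathbf{d}_{dF}(x',y) \le (1+\varepsilon)\, \mathbf{d}_{dF}(x,y). \]
   Context: For $x\in\mathbb{R}^z$ and $y\in\mathbb{R}^\ell$, the discrete Fréchet distance is $\mathbf{d}_{dF}(x,y)=\min_T\max_{(i,j)\in T}|x_i-y_j|$, where $T$ ranges over traversals: sequences of index pairs from $(1,1)$ to $(z,\ell)$ in which each step increases each index by $0$ or $1$ and at least one index by $1$. *)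

From HB Require Import structures.
From mathcomp Require Import all_boot all_order all_algebra.
From mathcomp Require Import classical_sets reals exp.
Set Implicit Arguments. Unset Strict Implicit. Unset Printing Implicit Defensive.
Import Order.TTheory GRing.Theory Num.Theory.
Local Open Scope ring_scope.

(* A time series in R^z is a sequence of reals of size z; entries are
   0-indexed: x_i is nth 0 x i. *)

Definition trav_step (p q : nat * nat) : bool :=
  [&& (q.1 == p.1) || (q.1 == p.1.+1),
      (q.2 == p.2) || (q.2 == p.2.+1) & p != q].

(* T is a traversal from (0,0) to (z-1, l-1) (0-indexed version of (1,1)..(z,l)) *)
Definition traversal (z l : nat) (T : seq (nat * nat)) : Prop :=
  exists s, T = (0%N, 0%N) :: s /\ path trav_step (0%N, 0%N) s /\
            last (0%N, 0%N) s = (z.-1, l.-1).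

Definition trav_cost (R : realType) (x y : seq R) (T : seq (nat * nat)) : R :=
  \big[Num.max/0]_(p <- T) `|nth 0 x p.1 - nth 0 y p.2|.

(* discrete Fréchet distance: min over traversals (the set of values is finite
   and nonempty for nonempty x, y, so the infimum is a minimum) *)
Definition dF (R : realType) (x y : seq R) : R :=
  inf [set r : R | exists T, traversal (size x) (size y) T /\ r = trav_cost x y T].

From HB Require Import structures.
From mathcomp Require Import all_boot all_order all_algebra.
From mathcomp Require Import classical_sets reals exp.
From mathcomp Require Import zify ring lra.
Import Order.TTheory GRing.Theory Num.Theory.
Local Open Scope ring_scope.
Set Implicit Arguments. Unset Strict Implicit. Unset Printing Implicit Defensive.

(* First, x is replaced by a series over a finite alphabet of
   size O(l/eps) that is pointwise within eps * min_y dF(x, y) of x.  If x takes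
   at most l distinct values, x itself will do.  Otherwise every traversal
   matches two distinct values of x with the same y_j, so dF(x, .) is bounded
   below by half the least gap between values of x; each x_i is then rounded,
   relative to the entry of a near-minimiser y* it is matched with, to a grid of
   mesh eps * min_y dF(x, y).
   Second, over a finite alphabet the function y |-> dF(w, y) on R^l is computed
   by a finite automaton reading w: its state is the set of configurations
   (current column, and for each column the letters of least and greatest value
   matched with it) reached by partial traversals.  Cutting out the part of w
   between two equal states, w can be shortened to fewer letters than there are
   states, 2^(l (K^2)^l) for an alphabet of size K. *)

Lemma foldl_shorten (T : finType) (A : Type) (step : T -> A -> T) (s0 : T)
    (w : seq A) :
  exists2 w' : seq A, (size w' < #|T|)%N & foldl step s0 w' = foldl step s0 w.
Proof.
have [m] := ubnP (size w); elim: m w => // m IH w lt_w_m.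
have [|ge_w] := ltnP (size w) #|T|; first by exists w.
pose st k := foldl step s0 (take k w).
have /(uniqPn s0) [i [j [lt_ij lt_j eq_st]]] :
    ~~ uniq [seq st k | k <- iota 0 (size w).+1].
  apply/negP => /card_uniqP card_st.
  have := max_card (mem [seq st k | k <- iota 0 (size w).+1]).
  by rewrite card_st size_map size_iota ltnNge ge_w.
rewrite size_map size_iota in lt_j.
rewrite !(nth_map 0%N) ?size_iota ?(ltn_trans lt_ij) // !nth_iota ?(ltn_trans lt_ij) //
  !add0n in eq_st.
have [|w' lt_w' eq_w'] := IH (take i w ++ drop j w).
  by rewrite size_cat size_take size_drop; case: ifP; lia.
by exists w' => //; rewrite eq_w' foldl_cat -/(st i) eq_st -foldl_cat cat_take_drop.
Qed.

Lemma ler_dist_max_ends (R : realDomainType) (lo w hi v : R) : lo <= w <= hi ->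
  `|w - v| <= Num.max `|lo - v| `|hi - v|.
Proof.
case/andP=> le_lo le_hi; rewrite le_max; have [le_vw|lt_wv] := lerP v w.
  have le_vhi : v <= hi := le_trans le_vw le_hi.
  by rewrite (ger0_norm (x := hi - v)) ?(ger0_norm (x := w - v)) ?subr_ge0 // lerD2r le_hi orbT.
have lt_lov : lo < v := le_lt_trans le_lo lt_wv.
by rewrite (ltr0_norm (x := lo - v)) ?subr_lt0 // opprB lerD2l lerN2 le_lo.
Qed.

Lemma trav_step_cases (p q : nat * nat) : trav_step p q ->
  [\/ q = (p.1, p.2.+1), q = (p.1.+1, p.2) | q = (p.1.+1, p.2.+1)].
Proof.
case: p q => a b [c d]; rewrite /trav_step /=.
by case/and3P => /orP[/eqP ->|/eqP ->] /orP[/eqP ->|/eqP ->]; rewrite ?eqxx // => _;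
  [constructor 1 | constructor 2 | constructor 3].
Qed.

Lemma trav_step_vert i j : trav_step (i, j) (i, j.+1).
Proof. rewrite /trav_step /= xpair_eqE; lia. Qed.

Lemma trav_step_horiz i j : trav_step (i, j) (i.+1, j).
Proof. rewrite /trav_step /= xpair_eqE; lia. Qed.

Lemma trav_step_diag i j : trav_step (i, j) (i.+1, j.+1).
Proof. rewrite /trav_step /= xpair_eqE; lia. Qed.

Lemma trav_step_le (p q : nat * nat) : trav_step p q ->
  [/\ (p.1 <= q.1 <= p.1.+1)%N & (p.2 <= q.2 <= p.2.+1)%N].
Proof. by case/trav_step_cases => ->; rewrite /= !leqnn !leqnSn. Qed.

Lemma path_trav_step_bounds (p0 : nat * nat) s : path trav_step p0 s ->
  forall q, q \in p0 :: s ->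
  [/\ (p0.1 <= q.1 <= (last p0 s).1)%N & (p0.2 <= q.2 <= (last p0 s).2)%N].
Proof.
elim: s p0 => [|p s IH] p0 /=.
  by move=> _ q; rewrite inE => /eqP ->; rewrite !leqnn.
case/andP=> /trav_step_le [st1 st2] /IH {}IH q; rewrite inE.
have [/andP[l1 _] /andP[l2 _]] := IH _ (mem_last p s).
case/orP=> [/eqP ->|/(IH q)]; move: st1 st2 l1 l2; case: (last p s) => ? ?;
  case: p {IH} => ? ?; case: p0 => ? ? /=; lia.
Qed.

Lemma path_trav_step_cover (p0 : nat * nat) s : path trav_step p0 s ->
  forall i, (p0.1 <= i <= (last p0 s).1)%N -> exists2 q, q \in p0 :: s & q.1 = i.
Proof.
elim: s p0 => [|p s IH] p0 /=.
  by move=> _ i le_i; exists p0; rewrite ?inE //; apply/eqP; rewrite eqn_leq.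
case/andP=> /trav_step_le [st1 _] /IH {}IH i /andP[le0 le1].
have [<-|ne] := eqVneq p0.1 i; first by exists p0; rewrite ?inE ?eqxx.
have [|q q_in <-] := IH i; first by rewrite le1; move/eqP: ne; lia.
by exists q; rewrite // inE q_in orbT.
Qed.

Lemma traversal_exists z l : (0 < z)%N -> (0 < l)%N -> exists T, traversal z l T.
Proof.
move=> z0 l0.
have row i : exists s, path trav_step (0%N, 0%N) s /\ last (0%N, 0%N) s = (i, 0%N).
  elim: i => [|i [s [path_s last_s]]]; first by exists [::].
  by exists (rcons s (i.+1, 0%N)); rewrite rcons_path path_s last_s last_rcons trav_step_horiz.
have col j : exists s, path trav_step (0%N, 0%N) s /\ last (0%N, 0%N) s = (z.-1, j).
  elim: j => [|j [s [path_s last_s]]]; first exact: row.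
  by exists (rcons s (z.-1, j.+1)); rewrite rcons_path path_s last_s last_rcons trav_step_vert.
by have [s [path_s last_s]] := col l.-1; exists ((0%N, 0%N) :: s), s.
Qed.

Lemma traversal_bounds z l T : traversal z l T ->
  forall q, q \in T -> (q.1 <= z.-1)%N /\ (q.2 <= l.-1)%N.
Proof.
case=> s [-> [path_s last_s]] q /(path_trav_step_bounds path_s).
by rewrite last_s => -[/andP[_ ->] /andP[_ ->]].
Qed.

Lemma traversal_cover z l T : traversal z l T ->
  forall i, (i < z)%N -> exists2 q, q \in T & q.1 = i.
Proof.
case=> s [-> [path_s last_s]] i lt_i; apply: (path_trav_step_cover path_s); rewrite last_s /=; lia.
Qed.

Section Frechet.
Variable R : realType.
Implicit Types x y : seq R.

Lemma trav_cost_ge0 x y T : 0 <= trav_cost x y T.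
Proof. exact: bigmax_ge_id. Qed.

Lemma le_trav_cost x y T q : q \in T ->
  `|nth 0 x q.1 - nth 0 y q.2| <= trav_cost x y T.
Proof. by move=> q_T; apply: (le_bigmax_seq _ _ xpredT _ q_T). Qed.

Lemma trav_cost_le x y T M : 0 <= M ->
  (forall q, q \in T -> `|nth 0 x q.1 - nth 0 y q.2| <= M) -> trav_cost x y T <= M.
Proof. by move=> M0 le_M; rewrite /trav_cost big_seq; apply: bigmax_le. Qed.

Definition traversal_costs x y : set R :=
  [set r | exists T, traversal (size x) (size y) T /\ r = trav_cost x y T].

Lemma traversal_costs_neq0 x y : (0 < size x)%N -> (0 < size y)%N ->
  (traversal_costs x y !=set0)%classic.
Proof.
by move=> x0 y0; have [T ?] := traversal_exists x0 y0; exists (trav_cost x y T), T.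
Qed.

Lemma dF_le_trav_cost x y T : traversal (size x) (size y) T -> dF x y <= trav_cost x y T.
Proof.
move=> tr_T; apply: (ge_inf (E := traversal_costs x y)); last by exists T.
by exists 0 => _ [T' [_ ->]]; apply: trav_cost_ge0.
Qed.

Lemma le_dF x y M : (0 < size x)%N -> (0 < size y)%N ->
  (forall T, traversal (size x) (size y) T -> M <= trav_cost x y T) -> M <= dF x y.
Proof.
move=> x0 y0 le_M; apply: lb_le_inf; first exact: traversal_costs_neq0.
by move=> _ [T [tr_T ->]]; apply: le_M.
Qed.

Lemma dF_ge0 x y : (0 < size x)%N -> (0 < size y)%N -> 0 <= dF x y.
Proof. by move=> x0 y0; apply: le_dF => // T _; apply: trav_cost_ge0. Qed.

Lemma dF_lt_trav_cost x y e : (0 < size x)%N -> (0 < size y)%N -> dF x y < e ->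
  exists2 T, traversal (size x) (size y) T & trav_cost x y T < e.
Proof.
move=> x0 y0 /(inf_lt (traversal_costs_neq0 x0 y0)) [_ [T [tr_T ->]] lt_e].
by exists T.
Qed.

Lemma dF_le_perturb x1 x2 y d : size x1 = size x2 ->
  (0 < size x1)%N -> (0 < size y)%N -> 0 <= d ->
  (forall i, `|nth 0 x1 i - nth 0 x2 i| <= d) -> dF x1 y <= dF x2 y + d.
Proof.
move=> eq_size x0 y0 d0 near_x; rewrite -lerBlDr; apply: le_dF; rewrite -?eq_size //.
move=> T tr_T; rewrite lerBlDr; apply: le_trans (dF_le_trav_cost tr_T) _.
apply: trav_cost_le => [|q q_T]; first by rewrite addr_ge0 ?trav_cost_ge0.
apply: le_trans (ler_distD (nth 0 x2 q.1) _ _) _.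
by rewrite addrC lerD ?near_x ?le_trav_cost.
Qed.

Lemma dF_approx x x' y (eps h : R) : size x' = size x -> (0 < size x)%N ->
  (0 < size y)%N -> (forall i, `|nth 0 x i - nth 0 x' i| <= h) -> h <= eps * dF x y ->
  (1 - eps) * dF x y <= dF x' y /\ dF x' y <= (1 + eps) * dF x y.
Proof.
move=> eq_size x0 y0 close le_h; have h0 : 0 <= h := le_trans (normr_ge0 _) (close 0%N).
have le_x : dF x y <= dF x' y + h := dF_le_perturb (esym eq_size) x0 y0 h0 close.
have le_x' : dF x' y <= dF x y + h.
  by apply: dF_le_perturb; rewrite ?eq_size // => i; rewrite distrC.
by split; lra.
Qed.

(* Pigeonhole: two distinct values of x are matched with the same entry of y. *)
Lemma traversal_close_pair x y T : (0 < size x)%N -> (0 < size y)%N ->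
  traversal (size x) (size y) T -> (size y < size (undup x))%N ->
  exists u v, [/\ u \in x, v \in x, u != v & `|u - v| <= trav_cost x y T *+ 2].
Proof.
move=> x0 y0 tr_T lt_y.
pose at_value u (q : nat * nat) := nth 0 x q.1 == u.
pose hit u := nth (0%N, 0%N) T (find (at_value u) T).
have has_hit u : u \in x -> has (at_value u) T.
  move=> x_u; have /(traversal_cover tr_T) [q q_T q1] : (index u x < size x)%N.
    by rewrite index_mem.
  by apply/hasP; exists q; rewrite // /at_value q1 nth_index.
have hit_T u : u \in x -> hit u \in T by move/has_hit; rewrite has_find; apply: mem_nth.
have hit_val u : u \in x -> nth 0 x (hit u).1 = u by move/has_hit/(nth_find (0%N, 0%N))/eqP.
have /(uniqPn 0%N) [i [j [lt_ij lt_j eq_col]]] : ~~ uniq [seq (hit u).2 | u <- undup x].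
  apply: contraL lt_y => /uniq_leq_size le_size; rewrite -leqNgt.
  rewrite -(size_iota 0 (size y)) -(size_map (fun u => (hit u).2)).
  apply: le_size => _ /mapP [u + ->]; rewrite mem_undup mem_iota add0n => /hit_T q_T.
  by have [_ /leq_ltn_trans ->] := traversal_bounds tr_T q_T; rewrite ?ltn_predL.
rewrite size_map in lt_j; have lt_i := ltn_trans lt_ij lt_j.
rewrite !(nth_map 0) // in eq_col.
set u := nth 0 (undup x) i in eq_col; set v := nth 0 (undup x) j in eq_col.
have x_u : u \in x by rewrite -mem_undup mem_nth.
have x_v : v \in x by rewrite -mem_undup mem_nth.
exists u, v; split => //; first by rewrite nth_uniq ?undup_uniq // ltn_eqF.
have := le_trav_cost x y (hit_T u x_u); have := le_trav_cost x y (hit_T v x_v).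
rewrite !hit_val // -eq_col => le_v le_u.
by apply: le_trans (ler_distD (nth 0 y (hit u).2) _ _) _; rewrite mulr2n lerD // distrC.
Qed.

Definition min_gap x : R :=
  \big[Num.min/1]_(p <- [seq (u, v) | u <- x, v <- x] | p.1 != p.2) `|p.1 - p.2|.

Lemma min_gap_gt0 x : 0 < min_gap x.
Proof. by apply: lt_bigmin => // p; rewrite normr_gt0 subr_eq0. Qed.

Lemma min_gap_le x u v : u \in x -> v \in x -> u != v -> min_gap x <= `|u - v|.
Proof. by move=> x_u x_v neq_uv; apply: (ge_bigmin_seq _ (u, v)) => //; apply: allpairs_f. Qed.

Lemma min_gap_le_dF x y : (0 < size x)%N -> (0 < size y)%N ->
  (size y < size (undup x))%N -> min_gap x / 2 <= dF x y.
Proof.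
move=> x0 y0 lt_y; apply: le_dF => // T tr_T.
have [u [v [x_u x_v neq_uv le_uv]]] := traversal_close_pair x0 y0 tr_T lt_y.
rewrite ler_pdivrMr // mulr_natr; exact: le_trans (min_gap_le x_u x_v neq_uv) le_uv.
Qed.

End Frechet.

Section RangeAutomaton.
Variables (R : realType) (S : finType) (a : S -> R) (n : nat).

(* A configuration (t, r) abstracts a partial traversal whose current column
   is t: for j <= t, r j holds the letters of least and greatest a-value matched
   with column j; the entries r j with j > t are irrelevant. *)
Definition profile := {ffun 'I_n.+1 -> S * S}.
Definition config := ('I_n.+1 * profile)%type.

Definition widen (rg : S * S) (b : S) : S * S :=
  (if a b < a rg.1 then b else rg.1, if a rg.2 < a b then b else rg.2).

Definition set_col (r : profile) (j : 'I_n.+1) (rg : S * S) : profile :=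
  [ffun k => if k == j then rg else r k].

Definition reset_cols (b : S) (t t' : nat) (r : profile) : profile :=
  [ffun j : 'I_n.+1 => if (t < j <= t')%N then (b, b) else r j].

(* Reading b from (t, r): a horizontal step widens the range of column t by b,
   a diagonal step leaves it; either is followed by vertical steps up to some
   column t', which set the columns t < j <= t' to (b, b). *)
Definition read_step (b : S) (c c' : config) : bool :=
  (c.1 <= c'.1)%N && (c'.2 == reset_cols b c.1 c'.1 (set_col c.2 c.1 (widen (c.2 c.1) b)))
  || (c.1 < c'.1)%N && (c'.2 == reset_cols b c.1 c'.1 c.2).

Definition start_state (b : S) : {set config} := [set c | c.2 == [ffun=> (b, b)]].

Definition next_state (St : {set config}) (b : S) : {set config} :=
  [set c' | [exists c in St, read_step b c c']].

Lemma reset_cols_id b t r : reset_cols b t t r = r.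
Proof.
apply/ffunP => j; rewrite ffunE; case: ifP => // /andP [lt_tj le_jt].
by have := leq_trans lt_tj le_jt; rewrite ltnn.
Qed.

Lemma reset_cols_const b t t' : reset_cols b t t' [ffun=> (b, b)] = [ffun=> (b, b)].
Proof. by apply/ffunP => j; rewrite !ffunE if_same. Qed.

Lemma reset_cols_succ b t t' r : (t <= t')%N -> (t' < n)%N ->
  reset_cols b t t'.+1 r = set_col (reset_cols b t t' r) (inord t'.+1) (b, b).
Proof.
move=> le_t lt_t'; apply/ffunP => j; rewrite !ffunE.
have [->|ne_j] := eqVneq j (inord t'.+1).
  by rewrite inordK ?ltnS // le_t leqnn.
have ne_val : (j : nat) != t'.+1 by apply: contra_neq ne_j => <-; rewrite inord_val.
by rewrite [(j <= t'.+1)%N]leq_eqVlt (negPf ne_val) ltnS.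
Qed.

Lemma widen_le (rg : S * S) b :
  [/\ a (widen rg b).1 <= a rg.1, a (widen rg b).1 <= a b,
      a rg.2 <= a (widen rg b).2 & a b <= a (widen rg b).2].
Proof. by rewrite /widen /=; split; case: ltP => // /ltW. Qed.

Definition is_range (rg : S * S) (A : seq S) : Prop :=
  [/\ rg.1 \in A, rg.2 \in A & {in A, forall b, a rg.1 <= a b <= a rg.2}].

Lemma is_range1 b : is_range (b, b) [:: b].
Proof. by split; rewrite ?mem_seq1 // => b'; rewrite mem_seq1 => /eqP ->; rewrite lexx. Qed.

Lemma is_range_widen rg A b : is_range rg A -> is_range (widen rg b) (rcons A b).
Proof.
case=> lo_A hi_A between; have [lo_lo lo_b hi_hi hi_b] := widen_le rg b.
split; rewrite ?mem_rcons ?inE.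
- by rewrite /widen /=; case: ifP; rewrite ?eqxx ?lo_A ?orbT.
- by rewrite /widen /=; case: ifP; rewrite ?eqxx ?lo_A ?hi_A ?orbT.
move=> b'; rewrite mem_rcons inE => /orP [/eqP -> | /between /andP [le1 le2]].
  by rewrite lo_b hi_b.
by rewrite (le_trans lo_lo le1) (le_trans le2 hi_hi).
Qed.

Definition range_cost (rg : S * S) (v : R) : R := Num.max `|a rg.1 - v| `|a rg.2 - v|.

Lemma is_range_dist rg A b v : is_range rg A -> b \in A -> `|a b - v| <= range_cost rg v.
Proof. by case=> _ _ between /between; apply: ler_dist_max_ends. Qed.

Definition profile_cost (y : seq R) (r : profile) : R :=
  \big[Num.max/0]_(j < n.+1) range_cost (r j) (nth 0 y j).

Section Word.
Variables (w0 : S) (ws : seq S).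
Local Notation f := (nth w0 (w0 :: ws)).

Definition profile_step (pr : (nat * nat) * profile) (q : nat * nat) :=
  (q, set_col pr.2 (inord q.2)
        (if q.2 == pr.1.2 then widen (pr.2 (inord q.2)) (f q.1) else (f q.1, f q.1))).

Definition path_profile (s : seq (nat * nat)) : profile :=
  (foldl profile_step ((0%N, 0%N), [ffun=> (w0, w0)]) s).2.

Lemma path_profile_rcons s q :
  path_profile (rcons s q) = set_col (path_profile s) (inord q.2)
    (if q.2 == (last (0%N, 0%N) s).2 then widen (path_profile s (inord q.2)) (f q.1)
     else (f q.1, f q.1)).
Proof.
have last_fold s' : (foldl profile_step ((0%N, 0%N), [ffun=> (w0, w0)]) s').1 =
    last (0%N, 0%N) s'.
  by elim/last_ind: s' => // s' q' _; rewrite -cats1 foldl_cat last_cat.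
by rewrite /path_profile -cats1 foldl_cat /= last_fold.
Qed.

Definition reach (k : nat) : {set config} :=
  foldl next_state (start_state w0) (take k ws).

Lemma reach_succ k : (k < size ws)%N -> reach k.+1 = next_state (reach k) (f k.+1).
Proof. by move=> lt_k; rewrite /reach (take_nth w0) // -cats1 foldl_cat. Qed.

Lemma reach_vert k t r : (k <= size ws)%N -> (t < n)%N ->
  (inord t, r) \in reach k -> (inord t.+1, set_col r (inord t.+1) (f k, f k)) \in reach k.
Proof.
case: k => [|k] le_k lt_t.
  rewrite /reach take0 !inE /= => /eqP ->; apply/eqP/ffunP => j.
  by rewrite !ffunE if_same.
rewrite reach_succ // !inE => /existsP [c /andP [St_c step_c]].
have lt_t1 : (t < n.+1)%N := leqW lt_t.
apply/existsP; exists c; move: step_c.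
rewrite St_c /read_step /= (inordK lt_t1) (inordK (lt_t : t.+1 < n.+1)%N).
case/orP=> /andP [le_c /eqP ->].
  by rewrite -(reset_cols_succ _ _ le_c lt_t) eqxx leqW.
by rewrite -(reset_cols_succ _ _ (ltnW le_c) lt_t) eqxx ltnS (ltnW le_c) orbT.
Qed.

Lemma path_profile_in_reach s i (t : 'I_n.+1) : path trav_step (0%N, 0%N) s ->
  last (0%N, 0%N) s = (i, val t) -> (i <= size ws)%N -> (t, path_profile s) \in reach i.
Proof.
elim/last_ind: s i t => [|s q IH] i t.
  move=> _ [<- t0] _; have -> : t = ord0 by apply/val_inj.
  by rewrite /reach take0 inE.
rewrite rcons_path last_rcons => /andP [path_s]; case E: (last _ s) => [p1 p2].
move=> /trav_step_cases /= [->|->|->] [<- t_eq] le_i; rewrite path_profile_rcons E /=.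
- have lt_p2 : (p2 < n)%N by rewrite -ltnS t_eq.
  have reach_s : (inord p2, path_profile s) \in reach p1.
    by apply: IH => //; rewrite E /= inordK // leqW.
  by rewrite (gtn_eqF (ltnSn p2)) -[t]inord_val -t_eq; apply: reach_vert.
- have reach_s : (t, path_profile s) \in reach p1.
    by apply: IH => //; [rewrite E t_eq | exact: ltnW].
  rewrite eqxx reach_succ // inE; apply/existsP; exists (t, path_profile s).
  by rewrite reach_s /read_step /= t_eq inord_val reset_cols_id leqnn eqxx.
- have lt_p2 : (p2 < n)%N by rewrite -ltnS t_eq.
  have reach_s : (inord p2, path_profile s) \in reach p1.
    by apply: (IH _ _ path_s); [rewrite E /= inordK // leqW | exact: ltnW].
  rewrite (gtn_eqF (ltnSn p2)) reach_succ // inE; apply/existsP.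
  exists (inord p2, path_profile s); rewrite reach_s /read_step /= -t_eq inordK ?(leqW lt_p2) //.
  apply/orP; right.
  by rewrite ltnSn (reset_cols_succ _ _ (leqnn p2) lt_p2) reset_cols_id eqxx.
Qed.

Lemma vert_extend s i t0 t1 t2 X : path trav_step (0%N, 0%N) s ->
  last (0%N, 0%N) s = (i, t1) -> path_profile s = reset_cols (f i) t0 t1 X ->
  (t0 <= t1)%N -> (t1 <= t2 <= n)%N ->
  exists s', [/\ path trav_step (0%N, 0%N) s', last (0%N, 0%N) s' = (i, t2)
               & path_profile s' = reset_cols (f i) t0 t2 X].
Proof.
move=> path_s last_s prof_s le01 /andP [le12 le2n].
rewrite -(subnKC le12) in le2n *; elim: (t2 - t1)%N le2n => [|d IH] le_n.
  by exists s; rewrite addn0.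
have [|s' [path' last' prof']] := IH; first by rewrite addnS in le_n; apply: ltnW.
exists (rcons s' (i, (t1 + d).+1)); rewrite addnS rcons_path path' last' trav_step_vert.
rewrite last_rcons path_profile_rcons last' /= (gtn_eqF (ltnSn _)) prof'.
by rewrite -reset_cols_succ ?(leq_trans le01 (leq_addr _ _)) // -addnS.
Qed.

Lemma reach_path i c : (i <= size ws)%N -> c \in reach i ->
  exists s, [/\ path trav_step (0%N, 0%N) s, last (0%N, 0%N) s = (i, val c.1)
              & path_profile s = c.2].
Proof.
elim: i c => [|i IH] c le_i.
  rewrite /reach take0 inE => /eqP prof_c.
  have := @vert_extend [::] 0 0 0 c.1 [ffun=> (w0, w0)] isT erefl
    (esym (reset_cols_id _ _ _)) (leqnn 0).
  rewrite reset_cols_const -prof_c; apply; rewrite /= -ltnS; exact: ltn_ord.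
rewrite reach_succ // inE => /existsP [c0 /andP [reach_c0 step_c]].
have [s0 [path0 last0 prof0]] := IH c0 (ltnW le_i) reach_c0.
have le_cn : (c.1 <= n)%N by rewrite -ltnS.
move: step_c; rewrite /read_step => /orP [] /andP [le_c /eqP ->].
  apply: (@vert_extend (rcons s0 (i.+1, val c0.1)) _ _ c0.1).
  - by rewrite rcons_path path0 last0 trav_step_horiz.
  - by rewrite last_rcons.
  - by rewrite path_profile_rcons last0 /= eqxx inord_val prof0 reset_cols_id.
  - exact: leqnn.
  - by rewrite le_c.
have lt_c0 : (c0.1 < n)%N by apply: leq_trans le_c _.
apply: (@vert_extend (rcons s0 (i.+1, (val c0.1).+1)) _ _ (val c0.1).+1).
- by rewrite rcons_path path0 last0 trav_step_diag.
- by rewrite last_rcons.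
- rewrite path_profile_rcons last0 /= (gtn_eqF (ltnSn _)) prof0.
  by rewrite (reset_cols_succ _ _ (leqnn _) lt_c0) reset_cols_id.
- exact: leqnSn.
- by rewrite le_c.
Qed.

Definition col_letters (s : seq (nat * nat)) (j : nat) : seq S :=
  [seq f q.1 | q <- (0%N, 0%N) :: s & q.2 == j].

Lemma col_letters_rcons s q j : col_letters (rcons s q) j =
  if q.2 == j then rcons (col_letters s j) (f q.1) else col_letters s j.
Proof. by rewrite /col_letters -rcons_cons filter_rcons; case: ifP; rewrite ?map_rcons. Qed.

Lemma path_profile_range s : path trav_step (0%N, 0%N) s ->
  ((last (0%N, 0%N) s).2 <= n)%N -> forall j : 'I_n.+1, (j <= (last (0%N, 0%N) s).2)%N ->
  is_range (path_profile s j) (col_letters s j).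
Proof.
elim/last_ind: s => [|s q IH].
  move=> _ _ j; rewrite leqn0 => /eqP j0.
  by rewrite /path_profile /col_letters /= ffunE j0; apply: is_range1.
rewrite rcons_path last_rcons => /andP [path_s step] le_qn j le_jq.
have [_ /andP [le_pq le_qp]] := trav_step_le step.
have {}IH := IH path_s (leq_trans le_pq le_qn).
rewrite path_profile_rcons col_letters_rcons ffunE.
have -> : (j == inord q.2) = (q.2 == j).
  by rewrite -(inj_eq val_inj) /= inordK ?ltnS // eq_sym.
have [eq_qj|ne_qj] := eqVneq q.2 j; last first.
  by apply: IH; move/eqP: ne_qj; lia.
have -> : inord q.2 = j by rewrite eq_qj inord_val.
case: eqP => [eq_qp|ne_qp].
  by apply: is_range_widen; apply: IH; rewrite -eq_qj eq_qp.
have -> : col_letters s j = [::].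
  apply/eqP; rewrite /col_letters -size_eq0 size_map size_filter -leqn0 leqNgt -has_count.
  apply/hasP => -[p /(path_trav_step_bounds path_s) [_ /andP [_ le_p]] /eqP eq_pj].
  by apply: ne_qp; apply/eqP; rewrite eqn_leq le_pq andbT eq_qj -eq_pj.
exact: is_range1.
Qed.

Lemma trav_cost_path y s : path trav_step (0%N, 0%N) s -> last (0%N, 0%N) s = (size ws, n) ->
  trav_cost (map a (w0 :: ws)) y ((0%N, 0%N) :: s) = profile_cost y (path_profile s).
Proof.
move=> path_s last_s.
have := path_profile_range path_s; rewrite last_s => /(_ (leqnn n)) ranges.
have bounds q : q \in (0%N, 0%N) :: s -> (q.1 <= size ws)%N /\ (q.2 <= n)%N.
  by move/(path_trav_step_bounds path_s); rewrite last_s => -[/andP [_ ->] /andP [_ ->]].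
have x_q q : q \in (0%N, 0%N) :: s -> nth 0 (map a (w0 :: ws)) q.1 = a (f q.1).
  by case/bounds => le_q _; rewrite (nth_map w0).
have col_cost j b : b \in col_letters s j ->
    `|a b - nth 0 y j| <= trav_cost (map a (w0 :: ws)) y ((0%N, 0%N) :: s).
  case/mapP=> q; rewrite mem_filter => /andP [/eqP <- q_T] ->.
  by rewrite -x_q //; apply: le_trav_cost.
apply/le_anti/andP; split.
  apply: trav_cost_le => [|q q_T]; first exact: bigmax_ge_id.
  have [_ le_q2] := bounds q q_T; rewrite x_q //.
  apply: le_trans (le_bigmax _ _ (inord q.2)); rewrite /= inordK ?ltnS //.
  have le_j : (@inord n q.2 <= n)%N by rewrite inordK ?ltnS.
  apply: is_range_dist (ranges _ le_j) _; rewrite inordK ?ltnS //.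
  by apply: map_f; rewrite mem_filter eqxx.
apply: bigmax_le => [|j _]; first exact: trav_cost_ge0.
have [lo_in hi_in _] := ranges j (ltn_ord j : (j < n.+1)%N).
by rewrite ge_max !col_cost.
Qed.

Lemma dF_reach y : size y = n.+1 -> dF (map a (w0 :: ws)) y =
  inf [set v | exists r, (ord_max, r) \in reach (size ws) /\ v = profile_cost y r].
Proof.
move=> size_y; rewrite /dF size_map size_y; congr inf; apply/seteqP; split=> v.
  case=> T [[s [-> [path_s last_s]]] ->]; exists (path_profile s).
  by rewrite trav_cost_path // path_profile_in_reach.
case=> r [reach_r ->]; have [s [path_s last_s prof_s]] := reach_path (leqnn _) reach_r.
by exists ((0%N, 0%N) :: s); rewrite trav_cost_path // prof_s; split => //; exists s.
Qed.

End Word.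

Lemma card_config_sets : #|{set config}| = (2 ^ (n.+1 * (#|S| * #|S|) ^ n.+1))%N.
Proof.
have := card_powerset [set: config]; rewrite powersetT !cardsT => ->.
by rewrite card_prod card_ord card_ffun card_prod card_ord.
Qed.

Lemma dF_compress (w : seq S) : (0 < size w)%N -> exists w' : seq S,
  [/\ (0 < size w')%N, (size w' <= 2 ^ (n.+1 * (#|S| * #|S|) ^ n.+1))%N &
      forall y : seq R, size y = n.+1 -> dF (map a w') y = dF (map a w) y].
Proof.
case: w => // w0 ws _.
have [ws' lt_ws' eq_reach] := foldl_shorten next_state (start_state w0) ws.
exists (w0 :: ws'); split => //; first by rewrite -card_config_sets.
by move=> y size_y; rewrite !dF_reach // /reach !take_size eq_reach.
Qed.

End RangeAutomaton.

Lemma ler_scale_div (R : realFieldType) (eps r c : R) :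
  0 < eps <= 1 -> 0 <= r -> 1 <= c -> r <= c * r / eps.
Proof. by case/andP=> eps0 eps1 r0 c1; rewrite ler_pdivlMr //; nra. Qed.

Section Quantization.
Variable R : realType.
Implicit Types x y : seq R.

Lemma exists_word_close (S : finType) (a : S -> R) x (h : R) : 0 <= h ->
  (forall i, (i < size x)%N -> exists c, `|nth 0 x i - a c| <= h) ->
  exists w : seq S, size w = size x /\
    forall i, `|nth 0 x i - nth 0 (map a w) i| <= h.
Proof.
case: x => [|v x] h0 close; first by exists [::]; split=> // i; rewrite nth_nil subrr normr0.
have [c0 _] := close 0%N isT.
pose w := [seq odflt c0 [pick c | `|nth 0 (v :: x) i - a c| <= h] | i <- iota 0 (size x).+1].
exists w; split=> [|i]; first by rewrite size_map size_iota.
have [lt_i|ge_i] := ltnP i (size x).+1; last first.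
  by rewrite !nth_default ?size_map ?size_iota // subrr normr0.
rewrite (nth_map c0) ?size_map ?size_iota // (nth_map 0%N) ?size_iota // nth_iota //.
case: pickP => [c //|none]; have [c close_c] := close i lt_i.
by have := none c; rewrite close_c.
Qed.

Lemma round_to_grid (u : R) (M : nat) : `|u| < M%:R ->
  exists k : 'I_(2 * M).+1, `|u - (k%:R - M%:R)| <= 1.
Proof.
rewrite ltr_norml => /andP [lo hi].
have v0 : 0 <= u + M%:R by rewrite -lerBlDr sub0r ltW.
pose k := Num.truncn (u + M%:R).
have k_le : k%:R <= u + M%:R by rewrite truncn_le.
have k_gt : u + M%:R < k%:R + 1 by rewrite natr1; apply: truncnS_gt.
have lt_k : (k < (2 * M).+1)%N by rewrite ltnS -(ler_nat R) natrM; lra.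
by exists (Ordinal lt_k); rewrite /= ler_norml; apply/andP; split; lra.
Qed.

Definition grid (ys : seq R) (h : R) (M : nat) (c : 'I_(size ys) * 'I_(2 * M).+1) : R :=
  nth 0 ys c.1 + h * ((c.2 : nat)%:R - M%:R).
Arguments grid : clear implicits.

Lemma grid_close (ys : seq R) (h : R) M (v : R) (j : 'I_(size ys)) : 0 < h ->
  `|v - nth 0 ys j| < M%:R * h -> exists c, `|v - grid ys h M c| <= h.
Proof.
move=> h0 close; have [|k le_k] := @round_to_grid ((v - nth 0 ys j) / h) M.
  by rewrite normrM normfV (gtr0_norm h0) ltr_pdivrMr.
exists (j, k).
have -> : v - grid ys h M (j, k) = h * ((v - nth 0 ys j) / h - (k%:R - M%:R)).
  by rewrite /grid; field; rewrite lt0r_neq0.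
by rewrite normrM (gtr0_norm h0) -[X in _ <= X]mulr1 ler_pM2l.
Qed.

Lemma dF_near_min x l : (0 < size x)%N -> (0 < l)%N -> (l < size (undup x))%N ->
  exists L ys, [/\ 0 < L, size ys = l, dF x ys < L *+ 2 &
                   forall y, size y = l -> L <= dF x y].
Proof.
move=> x0 l0 many.
pose D := [set r : R | exists y, size y = l /\ r = dF x y]%classic.
have D0 : (D !=set0)%classic by exists (dF x (nseq l 0)), (nseq l 0); rewrite size_nseq.
have D_lb : lbound D (min_gap x / 2).
  by move=> _ [y [size_y ->]]; apply: min_gap_le_dF; rewrite ?size_y.
have L0 : 0 < inf D by apply: lt_le_trans (lb_le_inf D0 D_lb); rewrite divr_gt0 ?min_gap_gt0.
have lt_2L : inf D < inf D *+ 2 by rewrite mulr2n ltrDl.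
have [_ [ys [size_ys ->]] lt_ys] := inf_lt D0 lt_2L.
exists (inf D), ys; split=> // y size_y.
by apply: ge_inf; [exists (min_gap x / 2) | exists y].
Qed.

Lemma dF_near_columns x (ys : seq R) (D : R) :
  (0 < size x)%N -> (0 < size ys)%N -> dF x ys < D ->
  forall i, (i < size x)%N -> exists j : 'I_(size ys), `|nth 0 x i - nth 0 ys j| < D.
Proof.
move=> x0 ys0 /(dF_lt_trav_cost x0 ys0) [T tr_T lt_D] i /(traversal_cover tr_T) [q q_T q1].
have [_ le_q2] := traversal_bounds tr_T q_T.
have lt_q2 : (q.2 < size ys)%N by rewrite (leq_ltn_trans le_q2) // ltn_predL.
by exists (Ordinal lt_q2); rewrite -q1 /=; apply: le_lt_trans (le_trav_cost _ _ q_T) lt_D.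
Qed.

Lemma finite_alphabet_approx (eps : R) (l : nat) (x : seq R) :
  0 < eps < 1 -> (0 < l)%N -> (0 < size x)%N ->
  exists (S : finType) (a : S -> R) (w : seq S) (h : R),
  [/\ size w = size x, #|S|%:R <= 7 * l%:R / eps,
      forall i, `|nth 0 x i - nth 0 (map a w) i| <= h &
      forall y, size y = l -> h <= eps * dF x y].
Proof.
case/andP=> eps0 eps1 l0 x0; have [few|many] := leqP (size (undup x)) l.
  have [|w [size_w close]] := @exists_word_close 'I_l (nth 0 (undup x)) x 0 (lexx 0).
    move=> i lt_i; have x_i : nth 0 x i \in undup x by rewrite mem_undup mem_nth.
    have lt_idx : (index (nth 0%R x i) (undup x) < l)%N by rewrite (leq_trans _ few) ?index_mem.
    by exists (Ordinal lt_idx); rewrite /= nth_index // subrr normr0.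
  exists 'I_l, (fun j : 'I_l => nth 0 (undup x) j), w, 0; split=> //.
    by rewrite card_ord ler_scale_div ?ler0n ?ltW ?eps0 //; lra.
  by move=> y size_y; rewrite mulr_ge0 ?dF_ge0 ?size_y // ltW.
have [L [ys [L0 size_ys lt_ys ge_L]]] := dF_near_min x0 l0 many.
(* Grid of mesh eps L with 2M + 1 points around each entry of ys: every x_i is
   within 2 L <= M eps L of some entry, and 2M + 1 <= 4 / eps + 3 <= 7 / eps. *)
pose M := (Num.truncn (2 / eps)).+1.
have M_gt : 2 / eps < M%:R by apply: truncnS_gt.
have M_le : M%:R <= 2 / eps + 1 by rewrite /M -natr1 lerD2r truncn_le divr_ge0 // ltW.
have h0 : 0 < eps * L by rewrite mulr_gt0.
have le_2L : L *+ 2 <= M%:R * (eps * L).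
  have -> : L *+ 2 = 2 / eps * (eps * L) by field; rewrite lt0r_neq0.
  by rewrite ler_pM2r // ltW.
have [|w [size_w close]] := @exists_word_close _ (grid ys (eps * L) M) x _ (ltW h0).
  move=> i lt_i; have [|j near_j] := dF_near_columns x0 _ lt_ys lt_i; first by rewrite size_ys.
  by apply: grid_close h0 (lt_le_trans near_j le_2L).
exists _, (grid ys (eps * L) M), w, (eps * L); split=> //; last first.
  by move=> y size_y; rewrite ler_pM2l ?ge_L.
rewrite card_prod !card_ord size_ys natrM mulrAC mulrC ler_pM2r ?ltr0n //.
have ie1 : 1 <= eps^-1 by rewrite invr_ge1 ?unitfE ?lt0r_neq0 // ltW.
by rewrite -natr1 natrM; move: M_le; rewrite /= -/M; lra.
Qed.

End Quantization.

Lemma powR_size_bound (R : realType) (m L K : nat) (B : R) :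
  (m <= 2 ^ (L * (K * K) ^ L))%N -> L%:R <= B -> K%:R <= B -> 1 <= B ->
  m%:R <= powR 2 (B ^+ (2 * L + 2)).
Proof.
move=> le_m le_L le_K B1; have B0 : 0 <= B := le_trans ler01 B1.
have le_E : (L * (K * K) ^ L)%:R <= B ^+ (2 * L + 2).
  apply: le_trans (_ : B * (B * B) ^+ L <= _).
    rewrite natrM natrX natrM; apply: ler_pM; rewrite ?exprn_ge0 ?mulr_ge0 ?ler0n //.
    by apply: lerXn2r; rewrite ?nnegrE ?mulr_ge0 ?ler0n // ler_pM ?ler0n.
  by rewrite -expr2 -exprM -exprS ler_weXn2l // addn2.
apply: le_trans (_ : (2 ^ (L * (K * K) ^ L))%:R <= _); first by rewrite ler_nat.
by rewrite natrX -[2 ^+ _]powR_mulrn ?ler0n // ler_powR ?ler1n.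
Qed.

Theorem corollary9p12 (R : realType) :
  exists C c : R, 0 < C /\ 0 < c /\
  forall (eps : R) (l z : nat) (x : seq R),
    0 < eps < 1 -> (0 < l)%N -> (0 < z)%N -> size x = z ->
    exists x' : seq R,
      (0 < size x')%N /\
      (size x')%:R <= C * powR 2 ((c * l%:R / eps) ^+ (2 * l + 2)) /\
      forall y : seq R, size y = l ->
        (1 - eps) * dF x y <= dF x' y /\ dF x' y <= (1 + eps) * dF x y.
Proof.
exists 1, 7; split; first exact: ltr01; split=> // eps l z x eps01 l0 z0 size_x.
have x0 : (0 < size x)%N by rewrite size_x.
have [S [a [w [h [size_w card_S close le_h]]]]] := finite_alphabet_approx eps01 l0 x0.
have [w' [w'0 size_w' dF_w']] : exists w' : seq S,
    [/\ (0 < size w')%N, (size w' <= 2 ^ (l * (#|S| * #|S|) ^ l))%N &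
        forall y, size y = l -> dF (map a w') y = dF (map a w) y].
  by rewrite -(prednK l0); apply: dF_compress; rewrite size_w.
have [eps0 /ltW eps1] := andP eps01.
have le_l : l%:R <= 7 * l%:R / eps by rewrite ler_scale_div ?eps0 ?ler0n //; lra.
exists (map a w'); rewrite size_map; split=> //; split.
  rewrite mul1r (powR_size_bound size_w' le_l card_S) //.
  by apply: le_trans le_l; rewrite ler1n.
move=> y size_y; rewrite dF_w' //.
by apply: dF_approx close (le_h y size_y); rewrite ?size_map ?size_y.
Qed.
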